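(* Let $\mathcal{X},\mathcal{Y},\hat{\mathcal{X}}$ be finite sets with $T:=|\hat{\mathcal{X}}|$, let $p(y|x)p(x)$ be a joint distribution with $p(x)>0$ for all $x$, let $\beta>0$, and let $\big(p_\beta(y|\hat x),p_\beta(\hat x)\big)$ be an IB root at $\beta$ with no vanishing coordinates. Define the square matrix $S$ of order $T|\mathcal{Y}|$, with rows and columns indexed by pairs, by $$S_{(y,\hat x),(y',\hat x')}:=\sum_x p_\beta(x|\hat x)\Big[\beta\tfrac{p(y|x)}{p_\beta(y|\hat x)}+(1-2\beta)\Big]p(y'|x)\Big[\delta_{\hat x,\hat x'}-p_\beta(\hat x'|x)\Big].$$ Then $\dim\ker(I-S)=\dim\ker(I-J)$, where $J$ is the matrix defined in the context and $I$ denotes the identity of the respective order. Moreover, the map $\bm v=(v_{y,\hat x})_{y,\hat x}\mapsto(\bm v,\bm u)$ with $u_{\hat x}:=\frac{1-\beta}{\beta}\sum_y v_{y,\hat x}$ is a bijection from the set of left eigenvectors of $S$ for the eigenvalue $1$ (the left kernel of $I-S$) onto the left kernel of $I-J$.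
   Context: An IB root at $\beta$ is an encoder $p(\hat x|x)$, decoder $p(y|\hat x)$ and marginal $p(\hat x)$ with $p(\hat x|x)=\frac{p(\hat x)}{Z(x,\beta)}\exp\{-\beta D_{KL}[p(\cdot|x)\|p(\cdot|\hat x)]\}$, $Z(x,\beta)$ the normalizer, $p(y|\hat x)=\sum_x p(y|x)p(x|\hat x)$ where $p(x|\hat x)=p(\hat x|x)p(x)/p(\hat x)$, and $p(\hat x)=\sum_xp(\hat x|x)p(x)$; $p_\beta(\hat x|x)$, $p_\beta(x|\hat x)$ denote the encoder and inverse encoder of the given root; $\delta$ is the Kronecker delta. Define $A(\hat x,\hat x')=\sum_x p_\beta(\hat x'|x)p_\beta(x|\hat x)$, $B(\hat x,\hat x')_y=\sum_x p(y|x)p_\beta(\hat x'|x)p_\beta(x|\hat x)$, $C(\hat x,\hat x')_{y,y'}=\sum_x p(y|x)p(y'|x)p_\beta(\hat x'|x)p_\beta(x|\hat x)$. $J$ is the square matrix of order $T(|\mathcal{Y}|+1)$ with rows indexed by pairs $(y,\hat x)$ then indices $\hat x$, columns by $(y',\hat x')$ then $\hat x'$, with entries: row $(y,\hat x)$, column $(y',\hat x')$: $\beta\sum_{\hat x'',y''}(\delta_{\hat x'',\hat x'}-\delta_{\hat x,\hat x'})\big[1-\tfrac{\delta_{y'',y}}{p_\beta(y|\hat x)}\big]C(\hat x,\hat x'')_{y',y''}$; row $(y,\hat x)$, column $\hat x'$: $(1-\beta)\sum_{y''}\big[1-\tfrac{\delta_{y'',y}}{p_\beta(y|\hat x)}\big]B(\hat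 x,\hat x')_{y''}$; row $\hat x$, column $(y',\hat x')$: $\beta[\delta_{\hat x,\hat x'}p_\beta(y'|\hat x)-B(\hat x,\hat x')_{y'}]$; row $\hat x$, column $\hat x'$: $(1-\beta)[\delta_{\hat x,\hat x'}-A(\hat x,\hat x')]$. (This is the Jacobian of one Blahut–Arimoto IB iteration in log-decoder coordinates at the root.) The left kernel of a matrix $M$ is $\{\bm w:\bm w^{\top}M=0\}$. *)

From HB Require Import structures.
From mathcomp Require Import all_boot all_order all_algebra.
From mathcomp Require Import all_classical all_reals all_analysis.
Set Implicit Arguments. Unset Strict Implicit. Unset Printing Implicit Defensive.
Import Order.TTheory GRing.Theory Num.Theory.
Local Open Scope ring_scope.

Section IB.
Variables (R : realType) (X Y Xh : finType).
(* py x y = p(y|x),  px x = p(x) *)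
Variables (py : X -> Y -> R) (px : X -> R) (beta : R).
(* q xh x = p_beta(xh|x) (encoder), r xh y = p_beta(y|xh) (decoder),
   m xh = p_beta(xh) (marginal) *)
Variables (q : Xh -> X -> R) (r : Xh -> Y -> R) (m : Xh -> R).

Definition joint_distribution :=
  (forall x, 0 < px x) /\ \sum_x px x = 1 /\
  (forall x y, 0 <= py x y) /\ (forall x, \sum_y py x y = 1).

Definition KL (x : X) (xh : Xh) : R :=
  \sum_y (if py x y == 0 then 0 else py x y * ln (py x y / r xh y)).

Definition Zn (x : X) : R := \sum_xh m xh * expR (- beta * KL x xh).

(* inverse encoder p_beta(x|xh) = p_beta(xh|x) p(x) / p_beta(xh) *)
Definition pinv (x : X) (xh : Xh) : R := q xh x * px x / m xh.

Definition IB_root :=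
  (forall xh x, q xh x = m xh / Zn x * expR (- beta * KL x xh)) /\
  (forall xh y, r xh y = \sum_x py x y * pinv x xh) /\
  (forall xh, m xh = \sum_x q xh x * px x).

Definition no_vanishing := (forall xh y, 0 < r xh y) /\ (forall xh, 0 < m xh).

Definition Amat (xh xh' : Xh) : R := \sum_x q xh' x * pinv x xh.
Definition Bmat (xh xh' : Xh) (y : Y) : R := \sum_x py x y * q xh' x * pinv x xh.
Definition Cmat (xh xh' : Xh) (y y' : Y) : R :=
  \sum_x py x y * py x y' * q xh' x * pinv x xh.

Definition dlt {T : eqType} (a b : T) : R := if a == b then 1 else 0.

Definition Sfun (i j : Y * Xh) : R :=
  let: (y, xh) := i in let: (y', xh') := j in
  \sum_x pinv x xh * (beta * (py x y / r xh y) + (1 - 2 * beta))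
         * py x y' * (dlt xh xh' - q xh' x).

Definition Jfun (i j : (Y * Xh) + Xh) : R :=
  match i, j with
  | inl (y, xh), inl (y', xh') =>
      beta * \sum_xh'' \sum_y'' (dlt xh'' xh' - dlt xh xh')
             * (1 - dlt y'' y / r xh y) * Cmat xh xh'' y' y''
  | inl (y, xh), inr xh' =>
      (1 - beta) * \sum_y'' (1 - dlt y'' y / r xh y) * Bmat xh xh' y''
  | inr xh, inl (y', xh') =>
      beta * (dlt xh xh' * r xh y' - Bmat xh xh' y')
  | inr xh, inr xh' =>
      (1 - beta) * (dlt xh xh' - Amat xh xh')
  end.

Definition nS := #|{: Y * Xh}|.
Definition nJ := #|{: (Y * Xh) + Xh}|.

Definition Smx : 'M[R]_nS :=
  \matrix_(i, j) Sfun (enum_val i) (enum_val j).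
Definition Jmx : 'M[R]_nJ :=
  \matrix_(i, j) Jfun (enum_val i) (enum_val j).

Definition extend (v : 'rV[R]_nS) : 'rV[R]_nJ :=
  \row_k match enum_val k with
         | inl yxh => v 0 (enum_rank yxh)
         | inr xh => (1 - beta) / beta * \sum_y v 0 (enum_rank (y, xh))
         end.
End IB.

Definition left_kernel (R : fieldType) (n : nat) (M : 'M[R]_n) (w : 'rV[R]_n) : Prop :=
  w *m M = 0.

(* Write J in blocks over the index set (Y * Xh) + Xh and let G := extend_coef, i.e.
   G t u = (1 - beta)/beta * [t.2 = u], so that extend v = (v, v G).  At an IB root
     S = J_LL + G J_RL      and      J_(., Xh) = J_(., Y * Xh) G,
   the second identity saying that beta times a column xh of J equals (1 - beta) times
   the sum of its columns (y, xh).  The column relation forces every left fixed vector w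
   of J to satisfy w_R = w_L G, i.e. w = extend w_L, and then (w J)_L = w_L S; so
   v |-> extend v is a linear bijection between the two left kernels. *)

From Pilot Require Import Defs.
From HB Require Import structures.
From mathcomp Require Import all_boot all_order all_algebra.
From mathcomp Require Import all_classical all_reals all_analysis.
From mathcomp Require Import ring.
Set Implicit Arguments. Unset Strict Implicit. Unset Printing Implicit Defensive.
Import Order.TTheory GRing.Theory Num.Theory.
Local Open Scope ring_scope.

Section KroneckerSums.
Variables (R : realType) (T : finType).

Lemma sum_dltl (j : T) (F : T -> R) : \sum_i dlt R i j * F i = F j.
Proof.
rewrite (bigD1 j) //= /dlt eqxx mul1r big1 ?addr0 // => i /negPf ->.
by rewrite mul0r.
Qed.

Lemma sum_dltr (j : T) (F : T -> R) : \sum_i dlt R j i * F i = F j.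
Proof. by rewrite -[RHS]sum_dltl; apply: eq_bigr => i _; rewrite /dlt eq_sym. Qed.

Lemma sum_dlt_subl (j k : T) (F : T -> R) :
  \sum_i (dlt R i j - dlt R k j) * F i = F j - dlt R k j * \sum_i F i.
Proof.
rewrite -[F j]sum_dltl mulr_sumr -sumrB; apply: eq_bigr => i _.
exact: mulrBl.
Qed.

Lemma sum_one_sub_dltl (j : T) (a : R) (F : T -> R) :
  \sum_i (1 - dlt R i j / a) * F i = \sum_i F i - F j / a.
Proof.
rewrite -[F j]sum_dltl mulr_suml -sumrB; apply: eq_bigr => i _.
by rewrite mulrBl mul1r mulrAC.
Qed.

Lemma sum_dlt_snd (U : finType) (F : U * T -> R) (j : T) :
  \sum_p F p * dlt R p.2 j = \sum_i F (i, j).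
Proof.
transitivity (\sum_i \sum_k F (i, k) * dlt R k j).
  by rewrite pair_bigA; apply: eq_bigr => -[].
by apply: eq_bigr => i _; under eq_bigr do rewrite mulrC; rewrite sum_dltl.
Qed.

End KroneckerSums.

Definition left_fixed (R : pzSemiRingType) (I : finType) (M : I -> I -> R) (v : I -> R) :=
  forall j, v j = \sum_i v i * M i j.

Section BlockLeftFixedPoints.
Variables (R : pzRingType) (T U : finType).
Variables (J : T + U -> T + U -> R) (G : T -> U -> R) (S : T -> T -> R).
Hypothesis S_def : forall t j, S t j = J (inl t) (inl j) + \sum_u G t u * J (inr u) (inl j).
Hypothesis J_inr : forall i u, J i (inr u) = \sum_t J i (inl t) * G t u.

Definition lift_row (v : T -> R) (i : T + U) : R :=
  match i with inl t => v t | inr u => \sum_t v t * G t u end.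

Lemma lift_row_mul_inl v j :
  \sum_i lift_row v i * J i (inl j) = \sum_t v t * S t j.
Proof.
under [RHS]eq_bigr do rewrite S_def mulrDr mulr_sumr.
rewrite big_sumType big_split /= [in RHS]exchange_big; congr (_ + _).
by apply: eq_bigr => u _; rewrite mulr_suml; apply: eq_bigr => t _; rewrite mulrA.
Qed.

Lemma mul_col_inr (w : T + U -> R) u :
  \sum_i w i * J i (inr u) = \sum_t (\sum_i w i * J i (inl t)) * G t u.
Proof.
under eq_bigr do rewrite J_inr mulr_sumr.
rewrite exchange_big; apply: eq_bigr => t _.
by rewrite mulr_suml; apply: eq_bigr => i _; rewrite mulrA.
Qed.

Lemma left_fixed_lift_row v : left_fixed S v -> left_fixed J (lift_row v).
Proof.
move=> Sv [t|u]; first by rewrite lift_row_mul_inl -Sv.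
by rewrite mul_col_inr; apply: eq_bigr => t _; rewrite lift_row_mul_inl -Sv.
Qed.

Lemma lift_row_inl w : left_fixed J w -> lift_row (w \o inl) =1 w.
Proof.
move=> Jw [t|u] //=; rewrite Jw mul_col_inr.
by apply: eq_bigr => t _; rewrite -Jw.
Qed.

Lemma left_fixed_inl w : left_fixed J w -> left_fixed S (w \o inl).
Proof.
move=> Jw t /=; rewrite -lift_row_mul_inl Jw.
by apply: eq_bigr => i _; rewrite lift_row_inl.
Qed.

End BlockLeftFixedPoints.

Lemma left_kernel_matrixE (R : fieldType) (T : finType) (M : T -> T -> R)
    (v : 'rV[R]_#|T|) :
  left_kernel (1%:M - \matrix_(i, j) M (enum_val i) (enum_val j)) v <->
  left_fixed M (fun t => v 0 (enum_rank t)).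
Proof.
have mulM j : (v *m \matrix_(i, j) M (enum_val i) (enum_val j)) 0 (enum_rank j)
    = \sum_t v 0 (enum_rank t) * M t j.
  rewrite mxE (reindex _ (onW_bij _ (enum_val_bij T))) /=.
  by apply: eq_bigr => i _; rewrite mxE enum_valK enum_rankK.
rewrite /left_kernel mulmxBr mulmx1; split=> [/eqP | Mv].
  by rewrite subr_eq0 => /eqP vM j; rewrite -mulM -vM.
apply/eqP; rewrite subr_eq0; apply/eqP/rowP => k.
by rewrite -(enum_valK k) Mv mulM.
Qed.

Lemma mxrank_linear_bij (F : fieldType) m n (f : {linear 'rV[F]_m -> 'rV[F]_n})
    (K1 : 'M[F]_m) (K2 : 'M[F]_n) :
  injective f ->
  (forall v, (v <= K1)%MS -> (f v <= K2)%MS) ->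
  (forall w, (w <= K2)%MS -> exists2 v, (v <= K1)%MS & f v = w) ->
  \rank K1 = \rank K2.
Proof.
move=> f_inj fK1 fK2; pose E := lin1_mx f.
have mulE v : v *m E = f v by exact: mul_rV_lin1.
have E_free : row_free E.
  rewrite -kermx_eq0; apply/eqP/row_matrixP => i; rewrite row0; apply: f_inj.
  by rewrite -mulE raddf0; apply/sub_kermxP; exact: row_sub.
rewrite -(mxrankMfree K1 E_free); apply/eqmx_rank/andP; split.
  by apply/row_subP => i; rewrite row_mul mulE fK1 ?row_sub.
apply/row_subP => i; have [v vK1 <-] := fK2 _ (row_sub i K2).
by rewrite -mulE submxMr.
Qed.

Section ExtendLinear.
Variables (R : realType) (Y Xh : finType) (beta : R).

Lemma extend_is_linear : linear (@extend R Y Xh beta).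
Proof.
move=> a u v; apply/rowP => k; rewrite !mxE; case: (enum_val k) => [t|xh].
  by rewrite !mxE.
rewrite mulrCA -mulrDr [a * _]mulr_sumr -big_split; congr (_ * _).
by apply: eq_bigr => y _; rewrite !mxE.
Qed.

HB.instance Definition _ :=
  GRing.isLinear.Build R _ _ _ (@extend R Y Xh beta) extend_is_linear.

Lemma extend_inl (v : 'rV[R]_(nS Y Xh)) (t : Y * Xh) :
  extend beta v 0 (enum_rank (inl t)) = v 0 (enum_rank t).
Proof. by rewrite mxE enum_rankK. Qed.

Lemma extend_inj : injective (@extend R Y Xh beta).
Proof.
move=> v1 v2 e12; apply/rowP => k.
by rewrite -(enum_valK k) -!extend_inl e12.
Qed.

End ExtendLinear.

Section IBJacobian.
Variables (R : realType) (X Y Xh : finType).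
Variables (py : X -> Y -> R) (px : X -> R) (beta : R).
Variables (q : Xh -> X -> R) (r : Xh -> Y -> R) (m : Xh -> R).
Hypotheses (Hjoint : joint_distribution py px) (beta_gt0 : 0 < beta)
  (Hroot : IB_root py px beta q r m) (Hpos : no_vanishing r m).

Local Notation pinv := (Defs.pinv px q m).
Local Notation A := (Amat px q m).
Local Notation B := (Bmat py px q m).
Local Notation C := (Cmat py px q m).
Local Notation S := (Sfun py px beta q r m).
Local Notation J := (Jfun py px beta q r m).
Local Notation dlt := (dlt R).

Lemma channel_sum1 x : \sum_y py x y = 1.
Proof. by case: Hjoint => _ [_ [_ ->]]. Qed.

Lemma decoder_neq0 xh y : r xh y != 0.
Proof. by case: Hpos => r_gt0 _; rewrite lt0r_neq0. Qed.

Lemma decoderE xh y : r xh y = \sum_x py x y * pinv x xh.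
Proof. by case: Hroot => _ [-> _]. Qed.

Lemma pinv_sum1 xh : \sum_x pinv x xh = 1.
Proof.
case: Hroot => _ [_ mE]; case: Hpos => _ /(_ xh) /lt0r_neq0 m_neq0.
by rewrite -mulr_suml -mE divff.
Qed.

Lemma encoder_sum1 (xh0 : Xh) x : \sum_xh q xh x = 1.
Proof.
case: Hroot => qE _; case: Hpos => _ m_gt0.
have term_gt0 xh : 0 < m xh * expR (- beta * KL py r x xh) by rewrite mulr_gt0 ?expR_gt0.
under eq_bigr do rewrite qE mulrAC.
rewrite -mulr_suml divff // lt0r_neq0 // /Zn (bigD1 xh0) //=.
by rewrite ltr_pwDl ?sumr_ge0 // => xh _; rewrite ltW.
Qed.

Lemma decoder_sum1 xh : \sum_y r xh y = 1.
Proof.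
under eq_bigr do rewrite decoderE.
rewrite exchange_big -[RHS](pinv_sum1 xh); apply: eq_bigr => x _.
by rewrite -mulr_suml channel_sum1 mul1r.
Qed.

Lemma Amat_sum1 xh : \sum_xh' A xh xh' = 1.
Proof.
rewrite /Amat exchange_big -[RHS](pinv_sum1 xh); apply: eq_bigr => x _.
by rewrite -mulr_suml (encoder_sum1 xh) mul1r.
Qed.

Lemma Bmat_sum_decoder xh y : \sum_xh' B xh xh' y = r xh y.
Proof.
rewrite /Bmat exchange_big decoderE; apply: eq_bigr => x _.
by rewrite -mulr_suml -mulr_sumr (encoder_sum1 xh) mulr1.
Qed.

Lemma Bmat_sum_channel xh xh' : \sum_y B xh xh' y = A xh xh'.
Proof.
rewrite /Bmat exchange_big; apply: eq_bigr => x _.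
by rewrite -!mulr_suml channel_sum1 mul1r.
Qed.

Lemma Cmat_sum_channel xh xh' y'' : \sum_y' C xh xh' y' y'' = B xh xh' y''.
Proof.
rewrite /Cmat exchange_big; apply: eq_bigr => x _.
by rewrite -!mulr_suml channel_sum1 mul1r.
Qed.

Lemma Amat_sub_Bmat_sum0 xh y : \sum_xh' (A xh xh' - B xh xh' y / r xh y) = 0.
Proof.
by rewrite sumrB Amat_sum1 -mulr_suml Bmat_sum_decoder divff ?decoder_neq0 ?subrr.
Qed.

Lemma Jfun_inl_inr y xh xh' :
  J (inl (y, xh)) (inr xh') = (1 - beta) * (A xh xh' - B xh xh' y / r xh y).
Proof. by rewrite /= sum_one_sub_dltl Bmat_sum_channel. Qed.

Lemma Jfun_inl_inl y xh y' xh' :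
  J (inl (y, xh)) (inl (y', xh')) =
  beta * \sum_x py x y' * pinv x xh * (1 - py x y / r xh y) * (q xh' x - dlt xh xh').
Proof.
rewrite /= /Cmat; congr (_ * _).
under eq_bigr do under eq_bigr do rewrite mulr_sumr.
under eq_bigr do rewrite exchange_big.
rewrite exchange_big; apply: eq_bigr => x _ /=.
transitivity (py x y' * pinv x xh * (\sum_y'' (1 - dlt y'' y / r xh y) * py x y'')
              * (\sum_xh'' (dlt xh'' xh' - dlt xh xh') * q xh'' x)).
  rewrite mulr_sumr; apply: eq_bigr => xh'' _.
  by rewrite [in RHS]mulr_sumr [in RHS]mulr_suml; apply: eq_bigr => y'' _; ring.
by rewrite sum_one_sub_dltl sum_dlt_subl channel_sum1 (encoder_sum1 xh) mulr1.
Qed.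

Lemma Jfun_inl_colsum y xh xh' :
  \sum_y' J (inl (y, xh)) (inl (y', xh')) = beta * (A xh xh' - B xh xh' y / r xh y).
Proof.
rewrite /= -mulr_sumr; congr (_ * _).
transitivity (\sum_xh'' (dlt xh'' xh' - dlt xh xh') * (A xh xh'' - B xh xh'' y / r xh y)).
  rewrite exchange_big; apply: eq_bigr => xh'' _ /=.
  rewrite exchange_big /=.
  under eq_bigr do rewrite -mulr_sumr Cmat_sum_channel -mulrA.
  by rewrite -mulr_sumr sum_one_sub_dltl Bmat_sum_channel.
by rewrite sum_dlt_subl Amat_sub_Bmat_sum0 mulr0 subr0.
Qed.

Lemma Jfun_inr_colsum xh xh' :
  \sum_y' J (inr xh) (inl (y', xh')) = beta * (dlt xh xh' - A xh xh').
Proof. by rewrite /= -mulr_sumr sumrB -mulr_sumr decoder_sum1 Bmat_sum_channel mulr1. Qed.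

Lemma Jfun_inr_col i u : beta * J i (inr u) = (1 - beta) * \sum_y J i (inl (y, u)).
Proof.
case: i => [[y xh]|xh]; first by rewrite Jfun_inl_inr Jfun_inl_colsum; ring.
by rewrite Jfun_inr_colsum /=; ring.
Qed.

Lemma Sfun_split y xh y' xh' :
  S (y, xh) (y', xh') =
  J (inl (y, xh)) (inl (y', xh')) + (1 - beta) / beta * J (inr xh) (inl (y', xh')).
Proof.
rewrite Jfun_inl_inl /= mulrA divfK ?lt0r_neq0 // /Bmat (decoderE xh y').
rewrite [dlt _ _ * _]mulr_sumr -sumrB !mulr_sumr -big_split /=.
by apply: eq_bigr => x _; ring.
Qed.

Definition extend_coef (t : Y * Xh) (u : Xh) : R := (1 - beta) / beta * dlt t.2 u.

Lemma Sfun_lift t j :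
  S t j = J (inl t) (inl j) + \sum_u extend_coef t u * J (inr u) (inl j).
Proof.
case: t j => [y xh] [y' xh']; rewrite Sfun_split; congr (_ + _).
by under eq_bigr do rewrite /extend_coef -[_ / _ * _ * _]mulrA; rewrite -mulr_sumr sum_dltr.
Qed.

Lemma Jfun_inr_lift i u : J i (inr u) = \sum_t J i (inl t) * extend_coef t u.
Proof.
under eq_bigr do rewrite /extend_coef mulrCA.
rewrite -mulr_sumr sum_dlt_snd; apply: (mulfI (lt0r_neq0 beta_gt0)).
by rewrite Jfun_inr_col; field; rewrite lt0r_neq0.
Qed.

Lemma extend_lift_row (v : 'rV[R]_(nS Y Xh)) i :
  extend beta v 0 (enum_rank i) = lift_row extend_coef (fun t => v 0 (enum_rank t)) i.
Proof.
case: i => [t|u]; rewrite mxE enum_rankK //=.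
by under [RHS]eq_bigr do rewrite /extend_coef mulrCA; rewrite -mulr_sumr sum_dlt_snd.
Qed.

Lemma left_kernel_extend v :
  left_kernel (1%:M - Smx py px beta q r m) v ->
  left_kernel (1%:M - Jmx py px beta q r m) (extend beta v).
Proof.
move/left_kernel_matrixE/(left_fixed_lift_row Sfun_lift Jfun_inr_lift) => Jv.
apply/left_kernel_matrixE => j.
by under eq_bigr do rewrite extend_lift_row; rewrite extend_lift_row; exact: Jv.
Qed.

Lemma left_kernel_extend_onto w :
  left_kernel (1%:M - Jmx py px beta q r m) w ->
  exists2 v, left_kernel (1%:M - Smx py px beta q r m) v & extend beta v = w.
Proof.
move/left_kernel_matrixE => Jw.
have wE := lift_row_inl Jfun_inr_lift Jw.
have Sw := left_fixed_inl Sfun_lift Jfun_inr_lift Jw.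
exists (\row_k w 0 (enum_rank (inl (enum_val k)))).
  apply/left_kernel_matrixE => t.
  by under eq_bigr do rewrite mxE enum_rankK; rewrite mxE enum_rankK; exact: Sw.
apply/rowP => k; rewrite -(enum_valK k) extend_lift_row -wE.
by congr lift_row; apply/funext => t; rewrite /= mxE enum_rankK.
Qed.

End IBJacobian.

Theorem lemma1 (R : realType) (X Y Xh : finType)
  (py : X -> Y -> R) (px : X -> R) (beta : R)
  (q : Xh -> X -> R) (r : Xh -> Y -> R) (m : Xh -> R) :
  joint_distribution py px ->
  0 < beta ->
  IB_root py px beta q r m ->
  no_vanishing r m ->
  let S := Smx py px beta q r m in
  let J := Jmx py px beta q r m in
  \rank (kermx (1%:M - S)) = \rank (kermx (1%:M - J)) /\
  (forall v, left_kernel (1%:M - S) v ->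
             left_kernel (1%:M - J) (extend beta v)) /\
  (forall v1 v2, left_kernel (1%:M - S) v1 -> left_kernel (1%:M - S) v2 ->
             extend beta v1 = extend beta v2 -> v1 = v2) /\
  (forall w, left_kernel (1%:M - J) w ->
             exists2 v, left_kernel (1%:M - S) v & extend beta v = w).
Proof.
move=> Hjoint beta_gt0 Hroot Hpos S J.
have extend_ker := left_kernel_extend Hjoint beta_gt0 Hroot Hpos.
have extend_onto := left_kernel_extend_onto Hjoint beta_gt0 Hroot Hpos.
split; last by split=> [//|]; split=> [v1 v2 _ _|//]; exact: extend_inj.
apply: (mxrank_linear_bij (extend_inj (beta := beta))).
  by move=> v /sub_kermxP /extend_ker /sub_kermxP.
move=> w /sub_kermxP /extend_onto [v /sub_kermxP vS <-].
by exists v.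
Qed.
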